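(* Let $\sigma$ be the involution of $\operatorname{Hilb}^m(S_\tau)$ induced by $(u,v,z)\mapsto(u,-v,z)$ on $S_\tau$. Then the Lagrangians $\mathcal{K}=\Sigma_{\alpha_1}\times\dots\times\Sigma_{\alpha_m}$ and $\mathcal{K}'=\Sigma_{\beta_1}\times\dots\times\Sigma_{\beta_m}$ in $\mathcal{Y}_{m,\tau}\subset\operatorname{Hilb}^m(S_\tau)$ are mapped into themselves by $\sigma$, and the fixed point sets of $\sigma|_{\mathcal{K}}$ and $\sigma|_{\mathcal{K}'}$ are the tori $\mathbb{T}_{\hat\alpha}=\hat\alpha_1\times\dots\times\hat\alpha_m$ and $\mathbb{T}_{\hat\beta}=\hat\beta_1\times\dots\times\hat\beta_m$, respectively, which lie in $\operatorname{Sym}^m(\hat S_\tau)\setminus\nabla$.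
   Context: $\tau$ is a set of $2m$ distinct complex numbers with sum $0$, $P_\tau(z)=\prod_{\mu\in\tau}(z-\mu)$, $S_\tau=\{u^2+v^2+P_\tau(z)=0\}\subset\mathbb{C}^3$, $\hat S_\tau=\{(u,z)\in\mathbb{C}^2:u^2+P_\tau(z)=0\}$ (the fixed curve of $(u,v,z)\mapsto(u,-v,z)$), and $\operatorname{Sym}^m(\hat S_\tau)=\operatorname{Hilb}^m(\hat S_\tau)\subset\operatorname{Hilb}^m(S_\tau)$. $\nabla\subset\operatorname{Sym}^m(\hat S_\tau)$ is the anti-diagonal: unordered tuples $\{(u_k,z_k)\}$ with $(u_i,z_i)=(-u_j,z_j)$ for some $i\ne j$. $\alpha_1,\dots,\alpha_m$ and $\beta_1,\dots,\beta_m$ are two crossingless matchings of $\tau$ (each a family of $m$ pairwise disjoint embedded arcs joining the points of $\tau$ in pairs). For an arc $\delta$, $\Sigma_\delta=\{(u,v,z)\in S_\tau: z\in\delta,\ u,v\in\sqrt{-P_\tau(z)}\,\mathbb{R}\}$ and $\hat\delta=\{(u,z)\in\mathbb{C}^2: z\in\delta,\ u=\pm\sqrt{-P_\tau(z)}\}\subset\hat S_\tau$, a simple closed curve. $\mathcal{Y}_{m,\tau}$ is the variety of quadruples of polynomials $(A,B,C,D)$ ($A,D$ monic of degree $m$ with opposite subleading coefficients, $\deg B,\deg C\le m-1$) with $AD-BC=P_\tau$, embedded openly in $\operatorname{Hilb}^m(S_\tau)$ by $(A,B,C,D)\mapsto\{Q: A(t)\mid Q(\frac{B+C}2(t),\frac{B-C}{2i}(t),t)\}$;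 the products $\mathcal{K},\mathcal{K}'$ lie in the part of it identified (via Hilbert–Chow) with unordered $m$-tuples of points of $S_\tau$ with distinct $z$-coordinates. *)

From HB Require Import structures.
From mathcomp Require Import all_boot all_order all_algebra.
From mathcomp Require Import all_classical all_reals all_analysis.
From mathcomp Require Import complex.
Set Implicit Arguments. Unset Strict Implicit. Unset Printing Implicit Defensive.
Import Order.TTheory GRing.Theory Num.Theory.
Import numFieldNormedType.Exports.
Local Open Scope classical_set_scope.
Local Open Scope ring_scope.
Local Open Scope complex_scope.

Section Prop72Defs.
Variable R : realType.
Local Notation C := R[i].

Definition pt3 := (C * C * C)%type.
Definition pt2 := (C * C)%type.

Definition Ptau (tau : seq C) (z : C) : C := \prod_(mu <- tau) (z - mu).

Definition tau_ok (m : nat) (tau : seq C) : Prop :=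
  [/\ size tau = (2 * m)%N, uniq tau & \sum_(mu <- tau) mu = 0].

Definition I01 : set R := `[(0:R), 1]%classic.

Definition arc_pts (g : R -> C) : set C := g @` I01.

(* embedded arc: continuous (C = R^2 with the product topology) and injective on [0,1] *)
Definition embedded_arc (g : R -> C) : Prop :=
  [/\ {within I01, continuous (fun t => @complex.Re R (g t))},
      {within I01, continuous (fun t => @complex.Im R (g t))} &
      (forall s t, I01 s -> I01 t -> g s = g t -> s = t)].

Definition crossingless_matching (m : nat) (tau : seq C) (a : 'I_m -> R -> C) : Prop :=
  [/\ (forall k, embedded_arc (a k)),
      (forall k, a k 0 \in tau /\ a k 1 \in tau),
      (forall k l, k != l -> arc_pts (a k) `&` arc_pts (a l) = set0) &
      (forall mu, mu \in tau -> exists k, mu = a k 0 \/ mu = a k 1)].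

(* w lies in sqrt(c) * R  (independent of the choice of square root) *)
Definition in_sqrt_line (c w : C) : Prop :=
  exists (s : C) (r : R), s ^+ 2 = c /\ w = s * r%:C.

Definition Sigma (tau : seq C) (delta : set C) : set pt3 :=
  fun p => let: (u, v, z) := p in
    [/\ u ^+ 2 + v ^+ 2 + Ptau tau z = 0, delta z,
        in_sqrt_line (- Ptau tau z) u & in_sqrt_line (- Ptau tau z) v].

Definition hat_arc (tau : seq C) (delta : set C) : set pt2 :=
  fun p => delta p.2 /\ p.1 ^+ 2 = - Ptau tau p.2.

(* the involution (u,v,z) |-> (u,-v,z) and its action on configurations
   (unordered m-tuples, represented by a seq; equality up to perm_eq) *)
Definition sigma_pt (p : pt3) : pt3 := let: (u, v, z) := p in (u, - v, z).
Definition sigma_conf (X : seq pt3) : seq pt3 := map sigma_pt X.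
Definition zcoord (p : pt3) : C := p.2.

Definition embed2 (p : pt2) : pt3 := (p.1, 0, p.2).

Definition in_prod (m : nat) (A : 'I_m -> set pt3) (X : seq pt3) : Prop :=
  exists f : 'I_m -> pt3, (forall k, A k (f k)) /\ perm_eq X (map f (enum 'I_m)).

Definition Kprod (m : nat) (tau : seq C) (a : 'I_m -> R -> C) : seq pt3 -> Prop :=
  in_prod (fun k => Sigma tau (arc_pts (a k))).

Definition Ttorus (m : nat) (tau : seq C) (a : 'I_m -> R -> C) : seq pt3 -> Prop :=
  in_prod (fun k => embed2 @` hat_arc tau (arc_pts (a k))).

Definition antidiag (Y : seq pt2) : Prop :=
  exists i j, [/\ (i < size Y)%N, (j < size Y)%N, i != j &
    nth (0, 0) Y i = (- (nth (0, 0) Y j).1, (nth (0, 0) Y j).2)].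

Definition in_Sym_minus_nabla (m : nat) (tau : seq C) (X : seq pt3) : Prop :=
  exists Y : seq pt2, [/\ X = map embed2 Y, size Y = m,
    (forall p, p \in Y -> p.1 ^+ 2 + Ptau tau p.2 = 0) & ~ antidiag Y].

(* conclusion of Prop 7.2 for one matching a:
   K sits in the distinct-z locus of Y_{m,tau} (where Hilb^m = unordered tuples),
   sigma maps K into itself, Fix(sigma|_K) = T_hat a, and T_hat a subset Sym^m(hat S) \ nabla *)
Definition prop72_for (m : nat) (tau : seq C) (a : 'I_m -> R -> C) : Prop :=
  [/\ (forall X, Kprod tau a X -> uniq (map zcoord X)),
      (forall X, Kprod tau a X -> Kprod tau a (sigma_conf X)),
      (forall X, (Kprod tau a X /\ perm_eq (sigma_conf X) X) <-> Ttorus tau a X) &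
      (forall X, Ttorus tau a X -> in_Sym_minus_nabla m tau X)].

End Prop72Defs.

From HB Require Import structures.
From mathcomp Require Import all_boot all_order all_algebra.
From mathcomp Require Import all_classical all_reals all_analysis.
From mathcomp Require Import complex.
Set Implicit Arguments. Unset Strict Implicit. Unset Printing Implicit Defensive.
Import Order.TTheory GRing.Theory Num.Theory.
Local Open Scope ring_scope.
Local Open Scope complex_scope.

(* The arcs of a crossingless matching are pairwise disjoint, so the points of
   a configuration in Sigma_{a_1} x ... x Sigma_{a_m} have distinct
   z-coordinates, each lying over its own arc. The involution preserves every
   Sigma_delta and the z-coordinate, so it can fix such a configuration only by
   fixing each of its points, i.e. when v = 0; and Sigma_delta meets {v = 0}
   exactly in hat delta. Distinct z-coordinates also keep the torus off the
   anti-diagonal. *)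

Section Proposition72.
Variable R : realType.
Local Notation C := R[i].
Implicit Types (tau : seq C) (delta : set C) (p : pt3 R) (q : pt2 R).

Definition z_separated m (A : 'I_m -> set (pt3 R)) : Prop :=
  forall k l p p', A k p -> A l p' -> zcoord p = zcoord p' -> k = l.

Lemma in_prod_size m (A : 'I_m -> set (pt3 R)) X : in_prod A X -> size X = m.
Proof. by case=> f [_ /perm_size ->]; rewrite size_map size_enum_ord. Qed.

Lemma in_prod_mem m (A : 'I_m -> set (pt3 R)) X p :
  in_prod A X -> p \in X -> exists k, A k p.
Proof.
by case=> f [Af /perm_mem ->] /mapP [k _ ->]; exists k.
Qed.

Lemma in_prod_map m (A B : 'I_m -> set (pt3 R)) g X :
  (forall k p, A k p -> B k (g p)) -> in_prod A X -> in_prod B (map g X).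
Proof.
move=> AB [f [Af Xf]]; exists (g \o f); split=> [k|]; first exact: AB.
by rewrite map_comp perm_map.
Qed.

Lemma in_prod_uniq_zcoord m (A : 'I_m -> set (pt3 R)) X :
  z_separated A -> in_prod A X -> uniq (map (@zcoord R) X).
Proof.
move=> sepA [f [Af Xf]].
rewrite (perm_uniq (perm_map _ Xf)) -map_comp map_inj_uniq ?enum_uniq // => k l.
exact: sepA (Af k) (Af l).
Qed.

(* Each [g (f k)] is some [f l] over the same z, so [l = k] by separation. *)
Lemma in_prod_fixed m (A : 'I_m -> set (pt3 R)) g (f : 'I_m -> pt3 R) X :
  z_separated A -> (forall k, A k (f k)) -> perm_eq X (map f (enum 'I_m)) ->
  (forall p, zcoord (g p) = zcoord p) -> perm_eq (map g X) X ->
  forall k, g (f k) = f k.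
Proof.
move=> sepA Af Xf zg gX k.
have : g (f k) \in X.
  by rewrite -(perm_mem gX) map_f // (perm_mem Xf) map_f ?mem_enum.
rewrite (perm_mem Xf) => /mapP [l _ gfk].
have lk : l = k by apply: sepA (Af l) (Af k) _; rewrite -gfk zg.
by rewrite gfk lk.
Qed.

Lemma matching_z_separated m tau (a : 'I_m -> R -> C) :
  crossingless_matching tau a -> z_separated (fun k => Sigma tau (arc_pts (a k))).
Proof.
case=> _ _ disj _ k l [[u v] z] [[u' v'] z'] [_ zk _ _] [_ zl _ _] /= zz'.
apply/eqP; apply: contraT => /disj kl.
have : (arc_pts (a k) `&` arc_pts (a l))%classic z by split; rewrite // zz'.
by rewrite kl.
Qed.

Lemma in_sqrt_lineN (c w : C) : in_sqrt_line c w -> in_sqrt_line c (- w).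
Proof.
case=> s [r [sc ->]]; exists s, (- r); split=> //.
by rewrite -mulrN; congr (_ * _); apply/eqP; rewrite eq_complex /= oppr0 !eqxx.
Qed.

Lemma Sigma_sigma_pt tau delta p : Sigma tau delta p -> Sigma tau delta (sigma_pt p).
Proof.
by case: p => [[u v] z] [Suvz dz su sv]; split; rewrite ?sqrrN //; apply: in_sqrt_lineN.
Qed.

Lemma zcoord_sigma_pt p : zcoord (sigma_pt p) = zcoord p.
Proof. by case: p => [[u v] z]. Qed.

Lemma sigma_pt_fixedP p : sigma_pt p = p <-> p = embed2 (p.1.1, p.2).
Proof.
case: p => [[u v] z] /=; split=> [[/eqP] | [->]]; last by rewrite oppr0.
by rewrite eq_sym -addr_eq0 -mulr2n mulrn_eq0 /= => /eqP ->.
Qed.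

Lemma Sigma_embed2 tau delta q : Sigma tau delta (embed2 q) <-> hat_arc tau delta q.
Proof.
case: q => u z; rewrite /Sigma /hat_arc /= expr0n addr0; split.
  by case=> /eqP Euz dz _ _; split=> //; apply/eqP; rewrite -addr_eq0.
case=> dz Eu; split=> //; first by rewrite Eu addNr.
  by exists u, 1; rewrite mulr1.
by exists u, 0; rewrite mulr0.
Qed.

Lemma Sigma_fixed_hat_arc tau delta p :
  Sigma tau delta p /\ sigma_pt p = p <-> (@embed2 R @` hat_arc tau delta)%classic p.
Proof.
split=> [[Sp /sigma_pt_fixedP pE] | [q hq <-]].
  by exists (p.1.1, p.2); rewrite -?Sigma_embed2 -?pE.
by rewrite Sigma_embed2 sigma_pt_fixedP; case: q hq.
Qed.

Lemma not_antidiag_uniq (Y : seq (pt2 R)) : uniq (map snd Y) -> ~ antidiag Y.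
Proof.
move=> Yuniq [i [j [iY jY ij /(congr1 snd) /= zij]]].
move: ij; rewrite -(nth_uniq 0 _ _ Yuniq) ?size_map //.
by rewrite !(nth_map (0 : pt2 R)) // zij eqxx.
Qed.

Lemma Ttorus_Kprod m tau (a : 'I_m -> R -> C) X : Ttorus tau a X -> Kprod tau a X.
Proof.
move=> TX; rewrite -(map_id X); apply: in_prod_map TX => k p.
by case/Sigma_fixed_hat_arc.
Qed.

Lemma Ttorus_fixed m tau (a : 'I_m -> R -> C) X p :
  Ttorus tau a X -> p \in X -> p = embed2 (p.1.1, p.2).
Proof.
by move=> TX /(in_prod_mem TX) [k /Sigma_fixed_hat_arc [_ /sigma_pt_fixedP]].
Qed.

Lemma Kprod_sigma_conf m tau (a : 'I_m -> R -> C) X :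
  Kprod tau a X -> Kprod tau a (sigma_conf X).
Proof. by apply: in_prod_map => k; apply: Sigma_sigma_pt. Qed.

Lemma Kprod_fixed_Ttorus m tau (a : 'I_m -> R -> C) X :
  crossingless_matching tau a ->
  (Kprod tau a X /\ perm_eq (sigma_conf X) X <-> Ttorus tau a X).
Proof.
move=> Ma; split=> [[[f [Sf Xf]] sX] | TX].
  exists f; split=> // k; apply/Sigma_fixed_hat_arc; split=> //.
  exact: in_prod_fixed (matching_z_separated Ma) Sf Xf zcoord_sigma_pt sX k.
split; first exact: Ttorus_Kprod.
rewrite /sigma_conf map_id_in // => p /(Ttorus_fixed TX) pE.
exact/sigma_pt_fixedP.
Qed.

Lemma Ttorus_Sym_minus_nabla m tau (a : 'I_m -> R -> C) X :
  crossingless_matching tau a -> Ttorus tau a X -> in_Sym_minus_nabla m tau X.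
Proof.
move=> Ma TX; exists (map (fun p : pt3 R => (p.1.1, p.2)) X); split.
- by rewrite -map_comp map_id_in // => p /(Ttorus_fixed TX).
- by rewrite size_map (in_prod_size TX).
- move=> _ /mapP [p /(in_prod_mem TX) [k [q [_ Eq] <-]] ->] /=.
  by rewrite Eq addNr.
- apply: not_antidiag_uniq; rewrite -map_comp.
  exact: in_prod_uniq_zcoord (matching_z_separated Ma) (Ttorus_Kprod TX).
Qed.

Lemma prop72_for_matching m tau (a : 'I_m -> R -> C) :
  crossingless_matching tau a -> prop72_for tau a.
Proof.
move=> Ma; split=> X.
- exact: in_prod_uniq_zcoord (matching_z_separated Ma).
- exact: Kprod_sigma_conf.
- exact: Kprod_fixed_Ttorus.
- exact: Ttorus_Sym_minus_nabla.
Qed.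

End Proposition72.

Theorem proposition7p2 (R : realType) (m : nat) (tau : seq R[i])
    (alpha beta : 'I_m -> R -> R[i]) :
  tau_ok m tau ->
  crossingless_matching tau alpha ->
  crossingless_matching tau beta ->
  prop72_for tau alpha /\ prop72_for tau beta.
Proof. by move=> _ Malpha Mbeta; split; apply: prop72_for_matching. Qed.
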